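(* Let $\mathcal A(z)$, $\mathcal I$ be as in the context and define $\mathcal I_-=\{s\in\mathcal I:\zeta(\mathcal A(s))<0\}$ and $\mathcal S_-=\{z\in\mathbb C:\operatorname{Re}z\in\mathcal I_-\}$. Then $\zeta(\mathcal A(z))<0$ for every $z\in\mathcal S_-$.
   Context: Let $\mathcal N=\{1,\dots,N\}$. Let $\Pi=(\pi_{nn'})$ be an $N\times N$ infinitesimal generator matrix (nonnegative off-diagonal entries, zero row sums). Let $\Psi(z)$ be diagonal with entries $\psi_n(z)=\log E(e^{zL^{(n)}_1})$, Lévy exponents of Lévy processes $L^{(n)}$. Let $\Upsilon(z)$ have diagonal entries $1$ and off-diagonal entries $\upsilon_{nn'}(z)=E(e^{zX_{nn'}})$, MGFs of real random variables ($\upsilon_{nn'}\equiv1$ when $\pi_{nn'}=0$). The domain of the MGF of $X$ is $\{z\in\mathbb C:E(e^{(\operatorname{Re}z)X})<\infty\}$; let $\mathcal S$ be the intersection of the domains of all $\psi_n$ and $\upsilon_{nn'}$ and $\mathcal I=\{\operatorname{Re}z:z\in\mathcal S\}$. Let $\Phi$ be diagonal with nonnegative entries. Set $\mathcal A(z)=\Psi(z)+\Pi\odot\Upsilon(z)-\Phi$ ($\odot$ entrywise product). $\zeta(A)$ is the maximum real part of the eigenvalues of $A$. *)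

From HB Require Import structures.
From mathcomp Require Import all_boot all_order all_algebra.
From mathcomp Require Import all_classical all_reals all_analysis.
From mathcomp.real_closed Require Import complex.
Set Implicit Arguments. Unset Strict Implicit. Unset Printing Implicit Defensive.
Import Order.TTheory GRing.Theory Num.Theory.
Import numFieldNormedType.Exports.
Local Open Scope classical_set_scope.
Local Open Scope ring_scope.

Section Defs.
Context {d : measure_display} {T : measurableType d} {R : realType}.
Variable P : probability T R.

Definition expC (z : R[i]) : R[i] :=
  Complex (expR (complex.Re z) * cos (complex.Im z)) (expR (complex.Re z) * sin (complex.Im z)).

Definition indep_family (n : nat) (Y : 'I_n -> T -> R) : Prop :=
  forall B : 'I_n -> set R, (forall i, measurable (B i)) ->
    P (\bigcap_(i in [set: 'I_n]) (Y i @^-1` B i)) = (\prod_(i < n) P (Y i @^-1` B i))%E.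

Definition cadlag_on_nonneg (f : R -> R) : Prop :=
  (forall t : R, 0 <= t -> f x @[x --> t^'+] --> f t) /\
  (forall t : R, 0 < t -> cvg (f x @[x --> t^'-])).

Definition levy_process (L : R -> T -> R) : Prop :=
  (forall t, measurable_fun setT (L t)) /\
  [/\ P [set w | L 0 w = 0] = 1%E,
      (forall (n : nat) (t : nat -> R), 0 <= t 0%N -> (forall k, t k < t k.+1) ->
         indep_family (fun i : 'I_n => fun w => L (t i.+1) w - L (t i) w)),
      (forall s t : R, 0 <= s -> s <= t -> forall B : set R, measurable B ->
         P [set w | B (L t w - L s w)] = P [set w | B (L (t - s) w - L 0 w)]),
      (forall t : R, 0 <= t -> forall e : R, 0 < e -> forall eps : R, 0 < eps ->
         exists2 del : R, 0 < del & forall h : R, 0 <= h -> `|h - t| < del ->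
           (P [set w | (e < `|L h w - L t w|)%R] <= eps%:E)%E) &
      (exists N0 : set T, P.-negligible N0 /\
         forall w, ~ N0 w -> cadlag_on_nonneg (fun t => L t w))].

Definition mgf_dom (X : T -> R) (s : R) : Prop :=
  ('E_P[fun w => expR (s * X w)] < +oo)%E.

Definition mgfC (X : T -> R) (z : R[i]) : R[i] :=
  Complex (fine 'E_P[fun w => expR (complex.Re z * X w) * cos (complex.Im z * X w)])
          (fine 'E_P[fun w => expR (complex.Re z * X w) * sin (complex.Im z * X w)]).

Definition is_levy_exponent (X : T -> R) (psi : R[i] -> R[i]) : Prop :=
  (forall z : R[i], mgf_dom X (complex.Re z) -> expC (psi z) = mgfC X z) /\
  (forall s : R, mgf_dom X s -> psi (s%:C)%C = (ln (fine 'E_P[fun w => expR (s * X w)]))%:C%C).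

End Defs.

Definition spectral_abscissa {R : realType} {N : nat} (A : 'M[R[i]]_N) : R :=
  sup (@complex.Re R @` [set a | eigenvalue A a]).

Definition is_generator {R : realType} {N : nat} (Pi : 'M[R]_N) : Prop :=
  (forall i j, i != j -> 0 <= Pi i j) /\ (forall i, \sum_j Pi i j = 0).

(* A(z) = Psi(z) + Pi .* Upsilon(z) - Phi, with Upsilon_nn = 1 and
   Upsilon_nn' = 1 whenever pi_nn' = 0 *)
Definition calA {d : measure_display} {T : measurableType d} {R : realType}
  (P : probability T R) {N : nat} (psi : 'I_N -> R[i] -> R[i]) (Pi : 'M[R]_N)
  (X : 'I_N -> 'I_N -> T -> R) (phi : 'I_N -> R) (z : R[i]) : 'M[R[i]]_N :=
  \matrix_(i, j)
    ((if i == j then psi i z else 0)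
     + (Pi i j)%:C%C * (if (i == j) || (Pi i j == 0) then 1 else mgfC P (X i j) z)
     - (if i == j then (phi i)%:C%C else 0)).

Definition calI {d : measure_display} {T : measurableType d} {R : realType}
  (P : probability T R) {N : nat} (L : 'I_N -> R -> T -> R) (Pi : 'M[R]_N)
  (X : 'I_N -> 'I_N -> T -> R) : set R :=
  [set s | (forall n, mgf_dom P (L n 1) s) /\
           (forall n n', n != n' -> Pi n n' != 0 -> mgf_dom P (X n n') s)].

From HB Require Import structures.
From mathcomp Require Import all_boot all_order all_algebra.
From mathcomp Require Import all_classical all_reals all_analysis.
From mathcomp.real_closed Require Import complex polyrcf.
From mathcomp Require Import measurable_realfun lra.
Set Implicit Arguments. Unset Strict Implicit. Unset Printing Implicit Defensive.
Import Order.TTheory GRing.Theory Num.Theory.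
Local Open Scope classical_set_scope.
Local Open Scope ring_scope.

(* Write s = Re z.  Since |E e^{zX}| <= E e^{sX}, the matrix A(z) is dominated
   by the real Metzler matrix A(s): |A(z)_nn'| <= A(s)_nn' off the diagonal and
   Re A(z)_nn <= A(s)_nn on it.  If v A(z) = mu v with v <> 0, the row vector
   u = |v| is nonnegative, nonzero and satisfies u A(s) >= (Re mu) u, so a
   Perron-Frobenius argument gives a real eigenvalue r >= Re mu of A(s); hence
   zeta(A(z)) <= zeta(A(s)) < 0.  The Perron-Frobenius step comes from M-matrix
   theory: a Z-matrix K such that K + s is invertible for every s >= 0 is
   monotone (u K >= 0 implies u >= 0), which is proved by induction on the
   dimension using Schur complements. *)

Section MMatrices.
Variable R : rcfType.
Implicit Types (p : {poly R}) (s t x : R).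

Lemma horner_char_poly n (A : 'M[R]_n) x : (char_poly A).[x] = \det (x%:M - A).
Proof.
rewrite /char_poly -horner_evalE -det_map_mx; congr (\det _).
apply/matrixP=> i j; rewrite !mxE /= horner_evalE.
by case: (i == j); rewrite /= ?mulr1n ?mulr0n ?hornerE.
Qed.

Lemma eigenvalue_det n (A : 'M[R]_n) x : eigenvalue A x = (\det (x%:M - A) == 0).
Proof. by rewrite eigenvalue_root_char /root horner_char_poly. Qed.

Lemma det_addr_scalar n (K : 'M[R]_n) s : \det (K + s%:M) = (char_poly (- K)).[s].
Proof. by rewrite horner_char_poly opprK addrC. Qed.

Lemma monic_eventually_gt0 p : p \is monic -> exists b, forall x, b <= x -> 0 < p.[x].
Proof.
move=> /monicP p_monic.
have [b Hb] := @poly_pinfty_gt_lc _ p ltac:(by rewrite p_monic ltr01).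
by exists b => x /Hb; rewrite p_monic; apply: lt_le_trans; rewrite ltr01.
Qed.

Lemma largest_root p x : p != 0 -> root p x ->
  exists2 y, x <= y & root p y /\ forall z, root p z -> z <= y.
Proof.
move=> p_neq0 px; have roots_p := roots_on_rootsR p_neq0.
exists (\big[Num.max/x]_(r <- rootsR p) r); first exact: bigmax_ge_id.
split; last by move=> z pz; apply: le_bigmax_seq => //; rewrite -roots_p pz andbT.
rewrite big_seq; apply: (big_ind (root p)) => // [a b pa pb|r].
  by case: leP.
by rewrite -roots_p => /andP[].
Qed.

Lemma poly_ge0_right_closed p x : (forall y, x < y -> 0 <= p.[y]) -> 0 <= p.[x].
Proof.
move=> p_ge0; rewrite leNgt; apply/negP => px_lt0.
have [d d_gt0 near_x] := @poly_cont _ x p (- p.[x]) ltac:(by rewrite oppr_gt0).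
have := near_x (x + d / 2); rewrite addrAC subrr add0r ger0_norm; last lra.
move=> /(_ ltac:(lra)) /(le_lt_trans (ler_norm _)).
by have := p_ge0 (x + d / 2) ltac:(by rewrite ltrDl divr_gt0); lra.
Qed.

Definition nnegmx m n (A : 'M[R]_(m, n)) := forall i j, 0 <= A i j.
Definition metzler n (A : 'M[R]_n) := forall i j, i != j -> 0 <= A i j.
Definition Zmatrix n (K : 'M[R]_n) := forall i j, i != j -> K i j <= 0.
(* For a Z-matrix, [nonsing_shifts] characterises the nonsingular M-matrices. *)
Definition nonsing_shifts n (K : 'M[R]_n) := forall s, 0 <= s -> \det (K + s%:M) != 0.
Definition monotone_mx n (K : 'M[R]_n) := forall u : 'rV_n, nnegmx (u *m K) -> nnegmx u.

Lemma nnegmx_mul m n k (A : 'M[R]_(m, n)) (B : 'M[R]_(n, k)) :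
  nnegmx A -> nnegmx B -> nnegmx (A *m B).
Proof. by move=> A_ge0 B_ge0 i j; rewrite mxE sumr_ge0 // => l _; rewrite mulr_ge0. Qed.

Lemma Zmatrix_shift n (K : 'M[R]_n) s : Zmatrix K -> Zmatrix (K + s%:M).
Proof. by move=> ZK i j ij; rewrite !mxE (negbTE ij) mulr0n addr0 ZK. Qed.

Lemma nonsing_shifts_shift n (K : 'M[R]_n) s :
  nonsing_shifts K -> 0 <= s -> nonsing_shifts (K + s%:M).
Proof. by move=> NK s_ge0 t t_ge0; rewrite -addrA -raddfD NK // addr_ge0. Qed.

Lemma nonsing_shifts_det_gt0 n (K : 'M[R]_n) : nonsing_shifts K -> 0 < \det K.
Proof.
move=> NK; have [b b_pos] := monic_eventually_gt0 (char_poly_monic (- K)).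
have /b_pos pb : b <= Num.max b 0 by rewrite le_max lexx.
have detK_neq0 : \det K != 0 by have := NK 0 (lexx _); rewrite raddf0 addr0.
rewrite lt_def detK_neq0 leNgt /=; apply/negP => detK_lt0.
have sign_change : (char_poly (- K)).[0] * (char_poly (- K)).[Num.max b 0] <= 0.
  by rewrite -det_addr_scalar raddf0 addr0 mulr_le0_ge0 ?ltW.
have b_ge0 : 0 <= Num.max b 0 by rewrite le_max lexx orbT.
have [y /andP[y_ge0 _] /rootP py] := polyrcf.poly_ivt b_ge0 sign_change.
by have /negP := NK y y_ge0; rewrite det_addr_scalar py eqxx.
Qed.

Lemma det_block_schur m n (A : 'M[R]_m) (B : 'M[R]_(m, n)) C (D : 'M[R]_n) :
  D \in unitmx -> \det (block_mx A B C D) = \det D * \det (A - B *m invmx D *m C).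
Proof.
move=> D_unit; have -> : block_mx A B C D =
   block_mx (A - B *m invmx D *m C) B 0 D *m block_mx 1%:M 0 (invmx D *m C) 1%:M.
  by rewrite mulmx_block !mulmx0 !mulmx1 !add0r !mulmxA mulmxV // mul1mx subrK.
by rewrite det_mulmx det_ublock det_lblock !det1 !mulr1 mulrC.
Qed.

Lemma monotone_invmx_nneg n (K : 'M[R]_n) :
  monotone_mx K -> K \in unitmx -> nnegmx (invmx K).
Proof.
move=> monoK K_unit i j; have := monoK (row i (invmx K)).
rewrite -row_mul mulVmx // => /(_ _ 0 j); rewrite mxE; apply=> ? k.
by rewrite !mxE ler0n.
Qed.

Lemma Zmatrix_drsubmx m n (K : 'M[R]_(m + n)) : Zmatrix K -> Zmatrix (drsubmx K).
Proof.
by move=> ZK i j ij; rewrite !mxE ZK //; apply: contra ij => /eqP/rshift_inj ->.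
Qed.

Lemma Zmatrix_ursubmx m n (K : 'M[R]_(m + n)) : Zmatrix K -> nnegmx (- ursubmx K).
Proof.
move=> ZK i j; rewrite !mxE oppr_ge0 ZK //.
by apply/eqP => /(congr1 val) /= eq_ij; have := ltn_ord i; rewrite eq_ij ltnNge leq_addr.
Qed.

Lemma Zmatrix_dlsubmx m n (K : 'M[R]_(m + n)) : Zmatrix K -> nnegmx (- dlsubmx K).
Proof.
move=> ZK i j; rewrite !mxE oppr_ge0 ZK //.
by apply/eqP => /(congr1 val) /= eq_ij; have := ltn_ord j; rewrite -eq_ij ltnNge leq_addr.
Qed.

Lemma addr_scalar_diag n (A : 'M[R]_n) s i : (A + s%:M) i i = A i i + s.
Proof. by rewrite !mxE eqxx mulr1n. Qed.

Lemma addr_scalar_block m n (K : 'M[R]_(m + n)) s :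
  K + s%:M = block_mx (ulsubmx K + s%:M) (ursubmx K) (dlsubmx K) (drsubmx K + s%:M).
Proof. by rewrite -{1}[K]submxK (scalar_mx_block m n) add_block_mx !addr0. Qed.

Lemma Zmatrix_schur_term_nneg m n (K : 'M[R]_(m + n)) : Zmatrix K ->
  monotone_mx (drsubmx K) -> drsubmx K \in unitmx ->
  nnegmx (ursubmx K *m invmx (drsubmx K) *m dlsubmx K).
Proof.
move=> ZK monoE E_unit; rewrite -[ursubmx K]opprK mulNmx mulNmx -mulmxN.
apply: nnegmx_mul; last exact: Zmatrix_dlsubmx.
by apply: nnegmx_mul; [apply: Zmatrix_ursubmx | apply: monotone_invmx_nneg].
Qed.

Lemma Zmatrix_det_le_drsubmx n (K : 'M[R]_(1 + n)) : Zmatrix K ->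
  monotone_mx (drsubmx K) -> 0 < \det (drsubmx K) ->
  \det K <= \det (drsubmx K) * ulsubmx K 0 0.
Proof.
move=> ZK monoE detE_gt0; have E_unit : drsubmx K \in unitmx.
  by rewrite unitmxE unitfE gt_eqF.
rewrite -{1}[K]submxK det_block_schur // det_mx11 ler_pM2l //.
rewrite [X in X <= _]mxE [X in _ + X <= _]mxE gerDl oppr_le0.
exact: Zmatrix_schur_term_nneg.
Qed.

Lemma nonsing_shifts_drsubmx n (K : 'M[R]_(1 + n)) :
  (forall E : 'M[R]_n, Zmatrix E -> nonsing_shifts E -> monotone_mx E) ->
  Zmatrix K -> nonsing_shifts K -> nonsing_shifts (drsubmx K).
Proof.
(* Beyond the largest root s1 of det (E + s), the Schur complement gives
   det (K + s) <= (K_00 + s) det (E + s); at s = s1 this forces det (K + s1) <= 0. *)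
move=> mono_n ZK NK s0 s0_ge0; apply/negP => /eqP E_sing.
set E := drsubmx K; set q := char_poly (- E).
have q_s0 : root q s0 by rewrite /root -det_addr_scalar E_sing.
have [s1 s01 [q_s1 q_le_s1]] := largest_root (monic_neq0 (char_poly_monic _)) q_s0.
have NEs s : s1 < s -> nonsing_shifts (E + s%:M).
  move=> lt_s1s t t_ge0; rewrite -addrA -raddfD /= det_addr_scalar; apply/negP.
  by move=> /(q_le_s1 (s + t)); rewrite leNgt ltr_wpDr.
have schur_gap s : s1 < s ->
    0 <= (q * ('X + (ulsubmx K 0 0)%:P) - char_poly (- K)).[s].
  move=> lt_s1s; have NEs' := NEs s lt_s1s.
  rewrite !hornerE -!det_addr_scalar subr_ge0 [s + _]addrC -addr_scalar_diag.
  have := @Zmatrix_det_le_drsubmx n (K + s%:M) (Zmatrix_shift s ZK).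
  rewrite [in drsubmx (K + _)]addr_scalar_block [in ulsubmx (K + _)]addr_scalar_block.
  rewrite block_mxKdr block_mxKul; apply; last exact: nonsing_shifts_det_gt0.
  exact/mono_n/NEs'/Zmatrix_shift/Zmatrix_drsubmx.
have := poly_ge0_right_closed schur_gap.
rewrite !hornerE (rootP q_s1) mul0r add0r oppr_ge0 -det_addr_scalar leNgt => /negP.
by apply; apply/nonsing_shifts_det_gt0/nonsing_shifts_shift/(le_trans s0_ge0).
Qed.

Lemma Zmatrix_monotone_block n (K : 'M[R]_(1 + n)) : Zmatrix K -> 0 < \det K ->
  monotone_mx (drsubmx K) -> 0 < \det (drsubmx K) -> monotone_mx K.
Proof.
(* With w = u K and sigma > 0 the Schur complement of E, u_0 sigma = w_0 - w' E^-1 c >= 0,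
   and then u' E = w' - u_0 b >= 0. *)
move=> ZK detK_gt0 monoE detE_gt0.
set a := ulsubmx K; set b := ursubmx K; set c := dlsubmx K; set E := drsubmx K.
have E_unit : E \in unitmx by rewrite unitmxE unitfE gt_eqF.
have schur_gt0 : 0 < (a - b *m invmx E *m c) 0 0.
  by move: detK_gt0; rewrite -[K]submxK det_block_schur // det_mx11 pmulr_rgt0.
move=> u; rewrite -[u]hsubmxK -[K]submxK mul_row_block.
move: (lsubmx u) (rsubmx u) => u0 u' uK_ge0.
have w0_ge0 : 0 <= (u0 *m a + u' *m c) 0 0.
  by have := uK_ge0 0 (lshift n 0); rewrite row_mxEl.
have w'_ge0 : nnegmx (u0 *m b + u' *m E).
  by move=> i k; have := uK_ge0 i (rshift 1 k); rewrite row_mxEr.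
set w' := u0 *m b + u' *m E in w'_ge0.
have u'E : u' *m E = w' + u0 *m - b by rewrite mulmxN addrC addKr.
have u0_ge0 : 0 <= u0 0 0.
  have w0_eq : u0 *m a + u' *m c = u0 *m (a - b *m invmx E *m c) - w' *m invmx E *m - c.
    have -> : u' = u' *m E *m invmx E by rewrite mulmxK.
    rewrite u'E mulmxN mulmxDl !mulmxBr !mulmxN !mulmxA opprK.
    by rewrite mulmxDl mulNmx addrA addrAC mulNmx.
  have := nnegmx_mul (nnegmx_mul w'_ge0 (monotone_invmx_nneg monoE E_unit))
    (Zmatrix_dlsubmx ZK) 0 0.
  move: w0_ge0; rewrite w0_eq [X in _ <= X -> _]mxE [X in _ + X]mxE subr_ge0 => w0_ge0.
  by move=> /le_trans /(_ w0_ge0); rewrite mxE big_ord1 pmulr_lge0.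
have u'_ge0 : nnegmx u'.
  apply: monoE; rewrite u'E => i k; rewrite mxE addr_ge0 //.
  by apply: (nnegmx_mul _ (Zmatrix_ursubmx ZK)) => ? ?; rewrite !ord1.
move=> i j; rewrite (ord1 i) -(splitK j); case: splitP => k _.
  by rewrite row_mxEl (ord1 k).
by rewrite row_mxEr.
Qed.

Theorem Zmatrix_monotone n (K : 'M[R]_n) : Zmatrix K -> nonsing_shifts K -> monotone_mx K.
Proof.
elim: n K => [|n IH] K ZK NK; first by move=> u _ ? [].
have NE := nonsing_shifts_drsubmx IH ZK NK.
apply: (Zmatrix_monotone_block ZK (nonsing_shifts_det_gt0 NK)) (nonsing_shifts_det_gt0 NE).
exact: IH (@Zmatrix_drsubmx 1 n K ZK) NE.
Qed.

Lemma metzler_eigenvalue_ge n (A : 'M[R]_n) (u : 'rV[R]_n) t :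
  metzler A -> nnegmx u -> u != 0 -> nnegmx (u *m A - t *: u) ->
  exists2 r, t <= r & eigenvalue A r.
Proof.
move=> MA u_ge0 u_neq0 uA_ge.
case: (pselect (exists2 r, t <= r & eigenvalue A r)) => // no_eig; exfalso.
have ZK : Zmatrix (t%:M - A).
  by move=> i j ij; rewrite !mxE (negbTE ij) mulr0n sub0r oppr_le0 MA.
have NK : nonsing_shifts (t%:M - A).
  move=> s s_ge0; apply/negP => sing; apply: no_eig; exists (t + s).
    by rewrite lerDl.
  by rewrite eigenvalue_det raddfD /= addrAC.
have /(Zmatrix_monotone ZK NK) u_le0 : nnegmx (- u *m (t%:M - A)).
  by rewrite mulNmx mulmxBr opprB mul_mx_scalar.
move/eqP: u_neq0; apply; apply/matrixP => i j; apply/le_anti.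
by have := u_le0 i j; rewrite !mxE oppr_ge0 u_ge0 andbT.
Qed.

End MMatrices.

Section Domination.
Variable R : rcfType.
Local Open Scope complex_scope.

Lemma normc_real (x : R[i]) : `|x| = (Normc.normc x)%:C.
Proof. by case: x => a b; rewrite normc_def. Qed.

Lemma normc_ge0 (x : R[i]) : 0 <= Normc.normc x.
Proof. by rewrite -ler0c -normc_real. Qed.

Lemma Re_le_normc (x : R[i]) : complex.Re x <= Normc.normc x.
Proof.
have := normc_ge_Re x; rewrite normc_real lecR.
exact: le_trans (ler_norm _).
Qed.

Lemma ReD (x y : R[i]) : complex.Re (x + y) = complex.Re x + complex.Re y.
Proof. by case: x => ? ?; case: y. Qed.

Lemma ReB (x y : R[i]) : complex.Re (x - y) = complex.Re x - complex.Re y.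
Proof. by case: x => ? ?; case: y. Qed.

Lemma eigenvector_offdiag_bound n (A : 'M[R]_n) (B : 'M[R[i]]_n) (v : 'rV_n) mu j :
  (forall i j, i != j -> `|B i j| <= (A i j)%:C) -> v *m B = mu *: v ->
  Normc.normc (mu - B j j) * Normc.normc (v 0 j)
    <= \sum_(i | i != j) Normc.normc (v 0 i) * A i j.
Proof.
move=> Bij vB; rewrite -lecR rmorphM rmorph_sum /= -!normc_real -normrM.
have -> : (mu - B j j) * v 0 j = \sum_(i | i != j) v 0 i * B i j.
  have /matrixP /(_ 0 j) := vB; rewrite !mxE (bigD1 j) //= => ev.
  by rewrite mulrBl -ev [B j j * _]mulrC addrAC subrr add0r.
rewrite (le_trans (ler_norm_sum _ _ _)) // ler_sum // => i ij.
by rewrite rmorphM /= -normc_real normrM ler_wpM2l ?Bij.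
Qed.

Lemma eigenvalue_dominated n (A : 'M[R]_n) (B : 'M[R[i]]_n) mu :
  metzler A -> (forall j, complex.Re (B j j) <= A j j) ->
  (forall i j, i != j -> `|B i j| <= (A i j)%:C) ->
  eigenvalue B mu -> exists2 r, complex.Re mu <= r & eigenvalue A r.
Proof.
move=> MA Bjj Bij /eigenvalueP [v vB v_neq0].
pose u := \row_j Normc.normc (v 0 j).
apply: (@metzler_eigenvalue_ge _ _ _ u _ MA).
- by move=> i j; rewrite mxE normc_ge0.
- apply: contra v_neq0 => /eqP u0; apply/eqP/matrixP => i j.
  rewrite (ord1 i) !mxE; apply/eqP; rewrite -normr_eq0 normc_real.
  by have /matrixP /(_ 0 j) := u0; rewrite !mxE => ->.
move=> i j; rewrite (ord1 i) !mxE (bigD1 j) //= !mxE.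
have diag_gap : (complex.Re mu - A j j) * Normc.normc (v 0 j)
    <= \sum_(i | i != j) Normc.normc (v 0 i) * A i j.
  apply: le_trans (eigenvector_offdiag_bound j Bij vB).
  by rewrite ler_wpM2r ?normc_ge0 // (le_trans _ (Re_le_normc _)) // ReB lerB.
under eq_bigr do rewrite mxE.
move: diag_gap; set S := \sum_(i | _) _; lra.
Qed.

End Domination.

Lemma cos_sin_combination_le (R : realType) (a b t : R) :
  a * cos t + b * sin t <= Num.sqrt (a ^+ 2 + b ^+ 2).
Proof.
have sq_ge0 : 0 <= a ^+ 2 + b ^+ 2 by rewrite addr_ge0 ?sqr_ge0.
have := sqr_sqrtr sq_ge0; have := sqrtr_ge0 (a ^+ 2 + b ^+ 2).
have := cos2Dsin2 t; have := sqr_ge0 (a * sin t - b * cos t).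
set n := Num.sqrt _; nra.
Qed.

Section MomentGeneratingFunction.
Context {d : measure_display} {T : measurableType d} {R : realType}.
Variable P : probability T R.
Implicit Types (X : T -> R) (s : R).

Definition mgfR X s : R := fine 'E_P[fun w => expR (s * X w)].

Lemma mgfR_ge0 X s : 0 <= mgfR X s.
Proof. by rewrite fine_ge0 // expectation_ge0 // => w; exact: expR_ge0. Qed.

Lemma mgfC_real X s : mgfC P X s%:C%C = (mgfR X s)%:C%C.
Proof.
rewrite /mgfC /=; congr Complex.
  suff -> : (fun w => expR (s * X w) * cos (0 * X w)) = fun w => expR (s * X w) by [].
  by apply/funext => w; rewrite mul0r cos0 mulr1.
suff -> : (fun w => expR (s * X w) * sin (0 * X w)) = cst 0 by rewrite expectation_cst.
by apply/funext => w; rewrite mul0r sin0 mulr0.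
Qed.

Lemma normc_expC (w : R[i]) : Normc.normc (expC w) = expR (complex.Re w).
Proof.
rewrite /= !exprMn -mulrDr cos2Dsin2 mulr1.
by rewrite sqrtr_sqr ger0_norm // expR_ge0.
Qed.

Lemma mgf_Lfun X s : measurable_fun setT X -> mgf_dom P X s ->
  (fun w => expR (s * X w)) \in Lfun P 1.
Proof.
move=> mX dom; apply/Lfun1_integrable/integrableP; split.
  by apply/measurable_EFinP/measurableT_comp => //; exact: measurable_funM.
under eq_integral => w _ do rewrite gee0_abs ?lee_fin ?expR_ge0 //.
by move: dom; rewrite /mgf_dom unlock.
Qed.

Lemma mgf_Lfun_bounded X s (f : T -> R) : measurable_fun setT X -> mgf_dom P X s ->
  measurable_fun setT f -> (forall w, `|f w| <= 1) ->
  (fun w => expR (s * X w) * f w) \in Lfun P 1.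
Proof.
move=> mX dom mf f_le1; have /Lfun1_integrable g_int := mgf_Lfun mX dom.
apply/Lfun1_integrable; apply: (le_integrable measurableT _ _ g_int).
  apply/measurable_EFinP/measurable_funM => //.
  by apply/measurableT_comp => //; exact: measurable_funM.
move=> w _ /=; rewrite lee_fin normrM ler_piMr //.
Qed.

Lemma expectation_le_Lfun1 (Y Z : T -> R) : Y \in Lfun P 1 -> Z \in Lfun P 1 ->
  (forall w, Y w <= Z w) -> ('E_P[Y] <= 'E_P[Z])%E.
Proof.
move=> /Lfun1_integrable iY /Lfun1_integrable iZ YZ.
by rewrite unlock; apply: le_integral => // w _; rewrite lee_fin.
Qed.

Lemma normc_mgfC_le X z : measurable_fun setT X -> mgf_dom P X (complex.Re z) ->
  Normc.normc (mgfC P X z) <= mgfR X (complex.Re z).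
Proof.
(* With a + ib = E[g e^{itX}] and n = |a + ib|, one has
   n^2 = E[g (a cos (tX) + b sin (tX))] <= n E[g] pointwise by Cauchy-Schwarz. *)
move=> mX dom; set s := complex.Re z; set t := complex.Im z.
set g := fun w => expR (s * X w).
have mtX : measurable_fun setT (fun w => t * X w) by exact: measurable_funM.
have bounded_Lfun (f : R -> R) : measurable_fun setT f -> (forall x, `|f x| <= 1) ->
    (fun w => g w * f (t * X w)) \in Lfun P 1.
  by move=> mf f_le1; apply: mgf_Lfun_bounded => //; exact: measurableT_comp mf mtX.
have cL := bounded_Lfun _ (continuous_measurable_fun (@continuous_cos R)) (@cos_max R).
have sL := bounded_Lfun _ (continuous_measurable_fun (@continuous_sin R)) (@sin_max R).
have gL : g \in Lfun P 1 := mgf_Lfun mX dom.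
rewrite /mgfC /=; set a := fine _; set b := fine _.
have Ea : ('E_P[fun w => g w * cos (t * X w)]%R = a%:E)%E.
  by rewrite fineK // expectation_fin_num.
have Eb : ('E_P[fun w => g w * sin (t * X w)]%R = b%:E)%E.
  by rewrite fineK // expectation_fin_num.
have Eg : ('E_P[g] = (mgfR X s)%:E)%E by rewrite fineK // expectation_fin_num.
set n := Num.sqrt _.
have n_ge0 : 0 <= n := sqrtr_ge0 _.
have n_sq : n ^+ 2 = a ^+ 2 + b ^+ 2 by rewrite sqr_sqrtr // addr_ge0 ?sqr_ge0.
have : n ^+ 2 <= n * mgfR X s.
  rewrite -lee_fin n_sq EFinM -Eg -expectationZl //.
  have -> : ((a ^+ 2 + b ^+ 2)%:E = 'E_P[(a \o* fun w => g w * cos (t * X w))%R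
                   \+ (b \o* fun w => g w * sin (t * X w))%R])%E.
    by rewrite expectationD ?Lfun_scale // !expectationZl // Ea Eb -!EFinM -EFinD !expr2.
  apply: expectation_le_Lfun1; rewrite ?rpredD ?Lfun_scale // => w /=.
  rewrite -!mulrA -mulrDr ler_wpM2l ?expR_ge0 //.
  by rewrite [cos _ * _]mulrC [sin _ * _]mulrC cos_sin_combination_le.
have [->|n_neq0] := eqVneq n 0; first by rewrite mgfR_ge0.
by rewrite expr2 ler_pM2l // lt_def n_neq0.
Qed.

Lemma Re_levy_exponent_le X psi z : measurable_fun setT X -> is_levy_exponent P X psi ->
  mgf_dom P X (complex.Re z) -> complex.Re (psi z) <= ln (mgfR X (complex.Re z)).
Proof.
move=> mX [psiE _] dom; have exp_le : expR (complex.Re (psi z)) <= mgfR X (complex.Re z).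
  by rewrite -normc_expC psiE // normc_mgfC_le.
rewrite -[complex.Re (psi z)]expRK ler_ln ?posrE ?expR_gt0 //.
exact: lt_le_trans (expR_gt0 _) exp_le.
Qed.

End MomentGeneratingFunction.

Section SpectralAbscissa.
Variable R : realType.
Variable n : nat.
Implicit Type A : 'M[R[i]]_n.

Lemma spectral_abscissa_has_ubound A : has_ubound (@complex.Re R @` [set a | eigenvalue A a]).
Proof.
have [rs char_A] := closed_field_poly_normal (char_poly A).
exists (\big[Num.max/0]_(x <- rs) complex.Re x) => _ [a /= A_a <-].
apply: le_bigmax_seq => //; move: A_a.
by rewrite eigenvalue_root_char char_A (monicP (char_poly_monic _)) scale1r root_prod_XsubC.
Qed.

Lemma Re_le_spectral_abscissa A mu : eigenvalue A mu -> complex.Re mu <= spectral_abscissa A.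
Proof. by move=> A_mu; apply: (ub_le_sup (spectral_abscissa_has_ubound A)); exists mu. Qed.

Lemma spectral_abscissa_le A r : (0 < n)%N ->
  (forall mu, eigenvalue A mu -> complex.Re mu <= r) -> spectral_abscissa A <= r.
Proof.
move=> n_gt0 le_r; apply: ge_sup => [|_ [mu A_mu <-]]; last exact: le_r.
by have [mu A_mu] := eigenvalue_closed A n_gt0; exists (complex.Re mu), mu.
Qed.

Lemma spectral_abscissa_dim0 A : n = 0%N -> spectral_abscissa A = 0.
Proof.
move=> n0; rewrite /spectral_abscissa -[X in sup X]/(@complex.Re R @` _).
suff -> : [set a | eigenvalue A a] = set0 by rewrite image_set0 sup0.
apply/seteqP; split => // a /eigenvalueP [v _]; apply/negP; rewrite negbK.
by apply/eqP/matrixP => i [j j_lt_n]; exfalso; move: j_lt_n; rewrite n0.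
Qed.

End SpectralAbscissa.

Section SwitchingGenerator.
Context {d : measure_display} {T : measurableType d} {R : realType}.
Variable P : probability T R.
Variables (N : nat) (L : 'I_N -> R -> T -> R) (psi : 'I_N -> R[i] -> R[i]).
Variables (X : 'I_N -> 'I_N -> T -> R) (Pi : 'M[R]_N) (phi : 'I_N -> R).
Hypothesis L_meas : forall n, measurable_fun setT (L n 1).
Hypothesis psi_levy : forall n, is_levy_exponent P (L n 1) (psi n).
Hypothesis X_meas : forall n n', measurable_fun setT (X n n').
Hypothesis Pi_gen : is_generator Pi.

Definition calA_real (s : R) : 'M[R]_N := \matrix_(i, j)
  ((if i == j then ln (mgfR P (L i 1) s) else 0)
   + Pi i j * (if (i == j) || (Pi i j == 0) then 1 else mgfR P (X i j) s)
   - (if i == j then phi i else 0)).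

Lemma calA_real_eq s : calI P L Pi X s ->
  calA P psi Pi X phi s%:C%C = map_mx (real_complex R) (calA_real s).
Proof.
move=> [L_dom _]; apply/matrixP => i j; rewrite !mxE (psi_levy i).2 // mgfC_real.
by case: (i == j); case: (Pi i j == 0); rewrite /= ?rmorphB ?rmorphD ?rmorphM ?rmorph0 ?rmorph1.
Qed.

Lemma calA_real_metzler s : metzler (calA_real s).
Proof.
move=> i j ij; have Pi_ge0 := Pi_gen.1 i j ij.
by rewrite mxE (negbTE ij) /= subr0 add0r; case: ifP; rewrite ?mulr1 ?mulr_ge0 ?mgfR_ge0.
Qed.

Lemma calA_diag_le z : calI P L Pi X (complex.Re z) ->
  forall j, complex.Re (calA P psi Pi X phi z j j) <= calA_real (complex.Re z) j j.
Proof.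
move=> [L_dom _] j; rewrite !mxE eqxx /= !mulr1 ReB ReD /= !lerD2r.
exact: Re_levy_exponent_le.
Qed.

Lemma calA_offdiag_le z : calI P L Pi X (complex.Re z) -> forall i j, i != j ->
  `|calA P psi Pi X phi z i j| <= (calA_real (complex.Re z) i j)%:C%C.
Proof.
move=> [_ X_dom] i j ij; have Pi_ge0 := Pi_gen.1 i j ij.
rewrite !mxE (negbTE ij) /= !subr0 !add0r normrM ger0_norm ?ler0c // rmorphM.
apply: ler_wpM2l; first by rewrite ler0c.
case: ifP => Pi_eq0; first by rewrite normr1.
rewrite normc_real lecR normc_mgfC_le //.
by apply: X_dom; rewrite ?Pi_eq0.
Qed.

End SwitchingGenerator.

Theorem proposition4 (d : measure_display) (T : measurableType d) (R : realType)
  (P : probability T R) (N : nat)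
  (L : 'I_N -> R -> T -> R) (psi : 'I_N -> R[i] -> R[i])
  (X : 'I_N -> 'I_N -> T -> R) (Pi : 'M[R]_N) (phi : 'I_N -> R) :
  (forall n, levy_process P (L n)) ->
  (forall n, is_levy_exponent P (L n 1) (psi n)) ->
  (forall n n', measurable_fun setT (X n n')) ->
  is_generator Pi ->
  (forall n, 0 <= phi n) ->
  let I := calI P L Pi X in
  let Iminus := [set s | I s /\ spectral_abscissa (calA P psi Pi X phi (s%:C)%C) < 0] in
  let Sminus := [set z : R[i] | Iminus (complex.Re z)] in
  forall z, Sminus z -> spectral_abscissa (calA P psi Pi X phi z) < 0.
Proof.
move=> L_levy psi_levy X_meas Pi_gen _ I Iminus Sminus z [I_s As_lt0].
have L_meas n : measurable_fun setT (L n 1) := (L_levy n).1 1.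
(* For N = 0 there are no eigenvalues and the abscissa is [sup set0 = 0]. *)
have N_gt0 : (0 < N)%N.
  by case: posnP As_lt0 => // N0; rewrite spectral_abscissa_dim0 // ltxx.
apply: le_lt_trans As_lt0; apply: spectral_abscissa_le => // mu Az_mu.
have As_metzler := calA_real_metzler P L X phi Pi_gen (complex.Re z).
have Az_diag := calA_diag_le phi L_meas psi_levy I_s.
have Az_offdiag := calA_offdiag_le psi phi X_meas Pi_gen I_s.
have [r le_mu_r Ar_r] := eigenvalue_dominated As_metzler Az_diag Az_offdiag Az_mu.
apply: le_trans le_mu_r _; apply: (@Re_le_spectral_abscissa _ _ _ r%:C%C).
by rewrite (calA_real_eq phi psi_levy I_s) (eigenvalue_map (real_complex R)).
Qed.
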